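(* Let $(X,\wedge,\vee,\bot,\top)$ be a bounded distributive lattice, let $n\ge 1$, and let $x=(x_1,\ldots,x_n)$ be a sequence of elements of $X$. For $0\le m\le n$ and $0\le k\le m+1$ define $$P_m(k)=\begin{cases}\bot & k=0,\\ \bigwedge_{I\subseteq\{1,\ldots,m\},\ |I|=k}\ \bigvee_{i\in I} x_i & 1\le k\le m,\\ \top & k=m+1.\end{cases}$$ Then for every $k$ with $1\le k\le n$, $$P_n(k)=P_{n-1}(k)\wedge\bigl(P_{n-1}(k-1)\vee x_n\bigr).$$
   Context: For $1\le k\le m$, $P_m(k)$ is the $k$-th element of the sequence $(x_1,\ldots,x_m)$ ''sorted with respect to the lattice'', i.e. the meet, over all $k$-element subsets $I$ of $\{1,\ldots,m\}$, of the join of the $x_i$ with $i\in I$. Here $\bot$ is the least and $\top$ the greatest element of $X$. *)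

From HB Require Import structures.
From mathcomp Require Import all_boot all_order.
Set Implicit Arguments. Unset Strict Implicit. Unset Printing Implicit Defensive.
Import Order.TTheory.
Local Open Scope order_scope.

(* P x m k for a sequence x_1, x_2, ... given as a function x : nat -> X,
   indexed from 1 (x 0 is never used).  The index set {1,..,m} is 'I_m,
   with i : 'I_m standing for the index i+1. *)
Definition P {d : Order.disp_t} {X : tbDistrLatticeType d}
    (x : nat -> X) (m k : nat) : X :=
  if k == 0 then \bot
  else if k <= m then
    \meet_(I : {set 'I_m} | #|I| == k) \join_(i in I) x i.+1
  else \top.

(* Split the k-subsets I of {1,..,n} according to whether n belongs to I.
   Those avoiding n are the k-subsets of {1,..,n-1}, contributing P_{n-1}(k);
   those containing n are J + {n} with |J| = k-1, contributing
   meet_J (join_J x_i \/ x_n) = P_{n-1}(k-1) \/ x_n by distributivity.  The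
   boundary values bot and top of P are exactly the empty join and the empty
   meet, so the formula needs no case analysis on k. *)

From HB Require Import structures.
From mathcomp Require Import all_boot all_order.
Import Order.TTheory.
Local Open Scope order_scope.

Lemma join_bigmeetl {d : Order.disp_t} {X : tDistrLatticeType d}
    (I : finType) (C : pred I) (F : I -> X) (a : X) :
  (\meet_(i | C i) F i) `|` a = \meet_(i | C i) (F i `|` a).
Proof.
apply: (big_morph (fun b => b `|` a)) => [u v|]; first by rewrite joinIl.
by rewrite join1x.
Qed.

Section LiftSets.
Variables (n : nat) (i0 : 'I_n).

Definition unlift_set (I : {set 'I_n}) : {set 'I_n.-1} :=
  [set j | lift i0 j \in I].

Lemma notin_imset_lift (J : {set 'I_n.-1}) : i0 \notin lift i0 @: J.
Proof. by apply/imsetP => -[j _ e]; move: (neq_lift i0 j); rewrite -e eqxx. Qed.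

Lemma unlift_set_imset (J : {set 'I_n.-1}) : unlift_set (lift i0 @: J) = J.
Proof. by apply/setP => j; rewrite inE mem_imset //; exact: lift_inj. Qed.

Lemma unlift_setU1 (J : {set 'I_n.-1}) : unlift_set (i0 |: lift i0 @: J) = J.
Proof.
apply/setP => j; rewrite !inE eq_sym (negbTE (neq_lift i0 j)) mem_imset //.
exact: lift_inj.
Qed.

Lemma mem_imset_unlift_set (I : {set 'I_n}) (i : 'I_n) :
  i0 != i -> (i \in lift i0 @: unlift_set I) = (i \in I).
Proof.
by move=> /unlift_some[j -> _]; rewrite mem_imset ?inE //; exact: lift_inj.
Qed.

Lemma imset_unlift_set (I : {set 'I_n}) :
  i0 \notin I -> lift i0 @: unlift_set I = I.
Proof.
move=> i0I; apply/setP => i; have [<-|ne] := eqVneq i0 i.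
  by rewrite (negbTE i0I) (negbTE (notin_imset_lift _)).
exact: mem_imset_unlift_set.
Qed.

Lemma setU1_imset_unlift_set (I : {set 'I_n}) :
  i0 \in I -> i0 |: lift i0 @: unlift_set I = I.
Proof.
move=> i0I; apply/setP => i; rewrite in_setU1; have [<-|ne] /= := eqVneq i0 i.
  by rewrite i0I.
exact: mem_imset_unlift_set.
Qed.

Lemma card_imset_lift (J : {set 'I_n.-1}) : #|lift i0 @: J| = #|J|.
Proof. exact/card_imset/lift_inj. Qed.

Lemma card_setU1_imset_lift (J : {set 'I_n.-1}) :
  #|i0 |: lift i0 @: J| = #|J|.+1.
Proof. by rewrite cardsU1 notin_imset_lift card_imset_lift. Qed.

Variables (R : Type) (idx : R) (op : Monoid.com_law idx).
Variables (k : nat) (F : {set 'I_n} -> R).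

Lemma big_card_notin :
  \big[op/idx]_(I : {set 'I_n} | (#|I| == k) && (i0 \notin I)) F I
    = \big[op/idx]_(J : {set 'I_n.-1} | #|J| == k) F (lift i0 @: J).
Proof.
rewrite (reindex_onto (fun J : {set 'I_n.-1} => lift i0 @: J) unlift_set).
2: by move=> I /andP[_ /imset_unlift_set].
apply: eq_bigl => J.
by rewrite card_imset_lift notin_imset_lift unlift_set_imset eqxx !andbT.
Qed.

Lemma big_card_in :
  \big[op/idx]_(I : {set 'I_n} | (#|I| == k.+1) && (i0 \in I)) F I
    = \big[op/idx]_(J : {set 'I_n.-1} | #|J| == k) F (i0 |: lift i0 @: J).
Proof.
rewrite (reindex_onto (fun J : {set 'I_n.-1} => i0 |: lift i0 @: J) unlift_set).
2: by move=> I /andP[_ /setU1_imset_unlift_set].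
apply: eq_bigl => J.
by rewrite card_setU1_imset_lift eqSS setU11 unlift_setU1 eqxx !andbT.
Qed.

End LiftSets.

Section MeetOfJoins.
Variables (d : Order.disp_t) (X : tbDistrLatticeType d) (x : nat -> X).

Definition meet_of_joins (m k : nat) : X :=
  \meet_(I : {set 'I_m} | #|I| == k) \join_(i in I) x i.+1.

Lemma P_meet_of_joins (m k : nat) : P x m k = meet_of_joins m k.
Proof.
rewrite /P /meet_of_joins; have [->|_] := eqVneq k 0.
  by rewrite (big_pred1 set0) ?big_set0 // => I; rewrite /= cards_eq0.
case: ifPn => // /negP km; rewrite big_pred0 // => I.
apply/negbTE/eqP => cardI; apply: km; rewrite -cardI.
by have := max_card (mem I); rewrite card_ord.
Qed.

Lemma meet_of_joinsS (m k : nat) :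
  meet_of_joins m.+1 k.+1
    = meet_of_joins m k.+1 `&` (meet_of_joins m k `|` x m.+1).
Proof.
rewrite /meet_of_joins.
rewrite [LHS](bigID (fun I : {set 'I_m.+1} => ord_max \in I)) meetC /=.
rewrite big_card_notin big_card_in join_bigmeetl.
have lift_inj_in J : {in J &, injective (@lift m.+1 ord_max)}.
  by move=> ? ? _ _; apply: lift_inj.
congr (_ `&` _); apply: eq_bigr => J _.
  rewrite big_setU1 ?notin_imset_lift // big_imset // joinC.
  by congr (_ `|` _); apply: eq_bigr => i _; rewrite lift_max.
by rewrite big_imset //; apply: eq_bigr => i _; rewrite lift_max.
Qed.

End MeetOfJoins.

Theorem proposition3p1 (d : Order.disp_t) (X : tbDistrLatticeType d)
    (n : nat) (x : nat -> X) :
  (1 <= n)%N ->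
  forall k : nat, (1 <= k <= n)%N ->
    P x n k = P x n.-1 k `&` (P x n.-1 k.-1 `|` x n).
Proof.
case: n => // m _ [//|k] _.
by rewrite !P_meet_of_joins meet_of_joinsS.
Qed.
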